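(* Every Massouros hyperfield has the FETVINS property. That is: let $F$ be a Massouros hyperfield (as defined in the context). Then for all integers $k<n$ and every system of $k$ homogeneous linear equations over $F$ in the $n$ variables $x_1,\dots,x_n$, there exist values $x_1,\dots,x_n\in F$, not all equal to $0$, which satisfy all $k$ equations simultaneously.
   Context: A hyperaddition on a nonempty set $H$ is a map $+:H\times H\to\mathcal P^*(H)$ (nonempty subsets of $H$) that is commutative and associative, where for subsets $A,B$ one sets $A+B=\bigcup_{a\in A,b\in B}(a+b)$ and an element $x$ is identified with $\{x\}$. A hypergroup is a set with a hyperaddition having a unique $0$ with $0+h=\{h\}$ for all $h$, such that for each $x$ there is a unique $y=:-x$ with $0\in x+y$, and such that $x\in y+z$ implies $z\in x+(-y)$. A hyperfield is a set $F$ with a hyperaddition and a multiplication such that $(F,+)$ is a hypergroup, $(F,\cdot)$ is a monoid, $a(b+c)=ab+ac$, $r\cdot 0=0$ for all $r$, and $F\setminus\{0\}$ is a multiplicative group. Massouros hyperfield: let $G$ be an abelian group written multiplicatively, $H$ a group, and $\phi:G\to H$ a group homomorphism with $|\phi(G)|\ge 3$. Let $F=G\cup\{0\}$, with multiplication that of $G$ extended by $0\cdot x=x\cdot 0=0$ for all $x\in F$, and equipped with a hyperaddition making $F$ a hyperfield. $F$ is called Massouros (with respect to $\phi$) if: (1) $\phi(-x)=\phi(x)$ for all $x\in G$; (2) for all $x,y\in G$ with $\phi(x)=\phi(y)$ one has $G\setminus\phi^{-1}(\phi(x))\subseteq x+y$; (3) for all $x,y\in G$ with $\phi(x)\ne\phi(y)$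 one has $\phi^{-1}(\{\phi(x),\phi(y)\})\subseteq x+y$. A homogeneous linear equation over $F$ is a statement $a_1x_1+a_2x_2+\cdots+a_mx_m\ni 0$ with nonzero coefficients $a_i\in F$ (terms with zero coefficient are omitted); values of the variables in $F$ satisfy it if $0$ belongs to the (set-valued) sum. *)

From mathcomp Require Import all_boot.
From Stdlib Require List.

Set Implicit Arguments.
Unset Strict Implicit.
Unset Printing Implicit Defensive.

(* A hyperaddition on F is encoded as a ternary relation:
   [add x y w] means  w \in x + y. *)

Section Hyper.
Variables (F : Type) (zero one : F) (mul : F -> F -> F)
          (add : F -> F -> F -> Prop).

Definition is_hyperaddition : Prop :=
  [/\ forall x y, exists w, add x y w,
      forall x y w, add x y w <-> add y x w &
      forall x y z w,
        (exists u, add x y u /\ add u z w) <-> (exists v, add y z v /\ add x v w)].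

Definition is_hypergroup : Prop :=
  [/\ is_hyperaddition,
      forall h w, add zero h w <-> w = h,
      forall z, (forall h w, add z h w <-> w = h) -> z = zero,
      forall x, exists y, add x y zero /\ forall y', add x y' zero -> y' = y &
      forall x y z y', add y y' zero -> add y z x -> add x y' z].

Definition is_hyperfield : Prop :=
  [/\ is_hypergroup,
      (forall a b c, mul a (mul b c) = mul (mul a b) c)
        /\ (forall a, mul one a = a /\ mul a one = a),
      forall a b c w, (exists u, add b c u /\ w = mul a u) <-> add (mul a b) (mul a c) w,
      forall r, mul r zero = zero &
      [/\ one <> zero,
          forall x y, x <> zero -> y <> zero -> mul x y <> zero &
          forall x, x <> zero -> exists y, [/\ y <> zero, mul x y = one & mul y x = one]]].

Definition is_group (H : Type) (hmul : H -> H -> H) (hone : H) (hinv : H -> H) : Prop :=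
  [/\ forall a b c, hmul a (hmul b c) = hmul (hmul a b) c,
      forall a, hmul hone a = a /\ hmul a hone = a &
      forall a, hmul (hinv a) a = hone /\ hmul a (hinv a) = hone].

(* Massouros hyperfield with respect to phi : G -> H, where G = F \ {0}
   (phi is given as a function on F; its value at 0 is irrelevant). *)
Definition is_massouros (H : Type) (hmul : H -> H -> H) (hone : H) (hinv : H -> H)
  (phi : F -> H) : Prop :=
  [/\ is_hyperfield,
      (forall x y, mul x y = mul y x) /\ (forall x, mul zero x = zero /\ mul x zero = zero),
      is_group hmul hone hinv
        /\ (forall x y, x <> zero -> y <> zero -> phi (mul x y) = hmul (phi x) (phi y)),
      (exists x y z, [/\ x <> zero, y <> zero & z <> zero]
                      /\ [/\ phi x <> phi y, phi y <> phi z & phi x <> phi z]) &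
      [/\
          forall x y, x <> zero -> add x y zero -> phi y = phi x,
          forall x y, x <> zero -> y <> zero -> phi x = phi y ->
            forall z, z <> zero -> phi z <> phi x -> add x y z &
          forall x y, x <> zero -> y <> zero -> phi x <> phi y ->
            forall z, z <> zero -> (phi z = phi x \/ phi z = phi y) -> add x y z]].

Fixpoint hsum (s : seq F) : F -> Prop :=
  match s with
  | [::] => fun w => w = zero
  | x :: s' =>
      match s' with
      | [::] => fun w => w = x
      | _ => fun w => exists u, hsum s' u /\ add x u w
      end
  end.

(* A homogeneous linear equation in the variables x_0, ..., x_(n-1):
   the list of terms (a, j) standing for a * x_j, with nonzero coefficients
   and distinct variables. *)
Definition lin_eq_wf (n : nat) (e : seq (F * 'I_n)) : Prop :=
  (forall a j, List.In (a, j) e -> a <> zero) /\ uniq (map snd e).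

Definition lin_eq_sat (n : nat) (e : seq (F * 'I_n)) (x : 'I_n -> F) : Prop :=
  hsum [seq mul p.1 (x p.2) | p <- e] zero.

End Hyper.

(* In a Massouros hyperfield the sum of two nonzero elements contains nonzero
   elements of two different phi-classes, and a sum of at least three nonzero
   elements that contains 0 is all of F.

   Take a minimal nonempty set T of variables met by fewer than |T| equations
   and restrict the system to T.  The restricted system satisfies Hall's
   condition (fewer than |S| equations live inside any nonempty S), and such a
   system has a solution whose support is exactly T, by induction on |T|.  If
   some proper S with |S| > 1 carries |S| - 1 equations, solve those first and
   contract S to a single variable.  Otherwise double counting gives a variable
   v occurring in at most two critical equations (three terms, exactly one of
   them in v); drop v with one equation containing it, solve the rest and choose
   x_v: noncritical equations accept any nonzero value, a critical one rejects
   one phi-class only, and the dropped equation offers values in two classes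
   when it is itself critical. *)

From mathcomp Require Import all_boot boolp zify.

Set Implicit Arguments.
Unset Strict Implicit.
Unset Printing Implicit Defensive.

Lemma mem_In (T : eqType) (t : T) (s : seq T) : t \in s -> List.In t s.
Proof.
by elim: s => // t' s IHs; rewrite in_cons => /predU1P [->|/IHs]; [left | right].
Qed.

Lemma count_rem (T : eqType) (a : pred T) (t : T) (s : seq T) :
  t \in s -> count a s = a t + count a (rem t s).
Proof. by move/perm_to_rem/permP->. Qed.

Lemma count_andNsub (T : Type) (a b : pred T) (s : seq T) : subpred b a ->
  count (fun x => a x && ~~ b x) s + count b s = count a s.
Proof.
move=> ba; elim: s => //= x s IHs.
by case bx: (b x); rewrite /= ?(ba x bx) ?andbT ?andbF; lia.
Qed.

Section Massouros.

Variables (F : eqType) (zero one : F) (mul : F -> F -> F)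
  (add : F -> F -> F -> Prop).
Hypothesis hypF : is_hyperfield zero one mul add.

Local Notation hsum := (hsum zero add).

(** * Sums in a hyperfield *)

Lemma add_total x y : exists w, add x y w.
Proof. by case: hypF => -[[]]. Qed.

Lemma addC x y w : add x y w <-> add y x w.
Proof. by case: hypF => -[[]]. Qed.

Lemma addA x y z w :
  (exists u, add x y u /\ add u z w) <-> (exists v, add y z v /\ add x v w).
Proof. by case: hypF => -[[]]. Qed.

Lemma add0x h w : add zero h w <-> w = h.
Proof. by case: hypF => -[]. Qed.

Lemma addx0 h w : add h zero w <-> w = h.
Proof. by rewrite addC add0x. Qed.

Lemma opp_exists x : exists y, add x y zero.
Proof. by case: hypF => -[_ _ _ /(_ x)[y []]]; exists y. Qed.

Lemma mul_add a b c w :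
  (exists u, add b c u /\ w = mul a u) <-> add (mul a b) (mul a c) w.
Proof. by case: hypF. Qed.

Lemma mulx0 x : mul x zero = zero.
Proof. by case: hypF. Qed.

Lemma mulA : associative mul.
Proof. by case: hypF => _ [mulA _]. Qed.

Lemma mul1x x : mul one x = x.
Proof. by case: hypF => _ [_ /(_ x)[]]. Qed.

Lemma one_neq0 : one != zero.
Proof. by case: hypF => _ _ _ _ [/eqP]. Qed.

Lemma mul_neq0 x y : x != zero -> y != zero -> mul x y != zero.
Proof. by case: hypF => _ _ _ _ [_ mulF0 _] /eqP x0 /eqP y0; apply/eqP/mulF0. Qed.

Lemma mul_inv x : x != zero -> exists2 y, y != zero & mul y x = one.
Proof.
move=> /eqP x0; case: hypF => _ _ _ _ [_ _ /(_ x x0) [y [y0 _ yx]]].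
by exists y => //; apply/eqP.
Qed.

Lemma opp_neq0 x y : x != zero -> add x y zero -> y != zero.
Proof.
by move=> x0 xy0; apply: contraNneq x0 => y0; move: xy0; rewrite y0 addx0 => ->.
Qed.

Lemma addCA a b x u w : add a b u -> add x u w -> exists v, add x b v /\ add a v w.
Proof.
move=> abu /addC xuw.
have [v [/addC bxv avw]] : exists v, add b x v /\ add a v w by apply/addA; exists u.
by exists v.
Qed.

Lemma hsum_cons x s w : hsum (x :: s) w <-> exists u, hsum s u /\ add x u w.
Proof.
case: s => [|y s] //=; split=> [->|[u [-> /addx0]]] //.
by exists zero; split=> //; apply/addx0.
Qed.

Lemma hsum_pair x y w : hsum [:: x; y] w <-> add x y w.
Proof. by rewrite hsum_cons; split=> [[u [/= ->]]|xyw] //; exists y. Qed.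

Lemma hsum_total s : exists w, hsum s w.
Proof.
elim: s => [|x s [u su]]; first by exists zero.
by have [w xuw] := add_total x u; exists w; apply/hsum_cons; exists u.
Qed.

Lemma hsum_cat s t w :
  hsum (s ++ t) w <-> exists a b, [/\ hsum s a, hsum t b & add a b w].
Proof.
elim: s w => [|x s IHs] w.
  split=> [tw|[a [b [/= -> tb /add0x ->]]]] //.
  by exists zero, w; split=> //; apply/add0x.
rewrite cat_cons hsum_cons; split.
- case=> u [/IHs [a [b [sa tb abu]]] xuw].
  have [a' [xaa' a'bw]] : exists a', add x a a' /\ add a' b w by apply/addA; exists u.
  by exists a', b; split=> //; apply/hsum_cons; exists a.
- case=> a' [b [/hsum_cons [a [sa xaa']] tb a'bw]].
  have [u [abu xuw]] : exists u, add a b u /\ add x u w by apply/addA; exists a'.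
  by exists u; split=> //; apply/IHs; exists a, b.
Qed.

Lemma hsum_perm s t w : perm_eq s t -> hsum s w -> hsum t w.
Proof.
elim: s t w => [|x s IHs] t w; first by rewrite perm_sym => /perm_nilP ->.
move=> xs_t; have: x \in t by rewrite -(perm_mem xs_t) mem_head.
move: xs_t => /[swap] /splitPr [t1 t2] xs_t /hsum_cons [u [su xuw]].
have s_t12 : perm_eq s (t1 ++ t2).
  by rewrite -(perm_cons x) (perm_trans xs_t) // (perm_catCA t1 [:: x] t2).
have [a [b [t1a t2b abu]]] := (hsum_cat t1 t2 u).1 (IHs _ _ s_t12 su).
have [b' [xbb' ab'w]] := addCA abu xuw.
by apply/hsum_cat; exists a, b'; split=> //; apply/hsum_cons; exists b.
Qed.

Lemma hsum_zeros s : all (pred1 zero) s -> hsum s zero.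
Proof.
elim: s => [|x s IHs] //= /andP [/eqP -> /IHs s0].
by apply/hsum_cons; exists zero; split=> //; apply/add0x.
Qed.

Lemma hsum_scale c s w : hsum s w -> hsum (map (mul c) s) (mul c w).
Proof.
elim: s w => [|x s IHs] w; first by move=> /= ->; rewrite mulx0.
move/hsum_cons => [u [su xuw]]; apply/hsum_cons; exists (mul c u).
by split; [exact: IHs | apply/mul_add; exists w].
Qed.

(** * Massouros hyperfields *)

Variables (H : Type) (hmul : H -> H -> H) (hone : H) (hinv : H -> H)
  (phi : F -> H).
Hypotheses (mulC : commutative mul) (groupH : is_group hmul hone hinv)
  (phi_morph : forall x y, x <> zero -> y <> zero -> phi (mul x y) = hmul (phi x) (phi y))
  (phi_image3 : exists x y z, [/\ x <> zero, y <> zero & z <> zero]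
                 /\ [/\ phi x <> phi y, phi y <> phi z & phi x <> phi z])
  (massouros1 : forall x y, x <> zero -> add x y zero -> phi y = phi x)
  (massouros2 : forall x y, x <> zero -> y <> zero -> phi x = phi y ->
     forall z, z <> zero -> phi z <> phi x -> add x y z)
  (massouros3 : forall x y, x <> zero -> y <> zero -> phi x <> phi y ->
     forall z, z <> zero -> (phi z = phi x \/ phi z = phi y) -> add x y z).

Lemma hmulI a : injective (hmul a).
Proof.
case: groupH => hmulA hmul1 hmulV b c abc.
have [h1b _] := hmul1 b; have [h1c _] := hmul1 c; have [hVa _] := hmulV a.
by rewrite -h1b -h1c -hVa -!hmulA abc.
Qed.

Lemma phiM x y : x != zero -> y != zero -> phi (mul x y) = hmul (phi x) (phi y).
Proof. by move=> /eqP x0 /eqP y0; apply: phi_morph. Qed.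

Lemma phi_opp x y : x != zero -> add x y zero -> phi y = phi x.
Proof. by move=> /eqP; apply: massouros1. Qed.

Lemma add_same_class x y z : x != zero -> y != zero -> phi x = phi y ->
  z != zero -> phi z <> phi x -> add x y z.
Proof. by move=> /eqP x0 /eqP y0 xy /eqP; apply: massouros2. Qed.

Lemma add_diff_class x y z : x != zero -> y != zero -> phi x <> phi y ->
  z != zero -> phi z = phi x \/ phi z = phi y -> add x y z.
Proof. by move=> /eqP x0 /eqP y0 xy /eqP; apply: massouros3. Qed.

Lemma add_two_classes x y : x != zero -> y != zero ->
  exists w1 w2, [/\ add x y w1, add x y w2, w1 != zero, w2 != zero & phi w1 <> phi w2].
Proof.
move=> x0 y0; have [xy|xy] := EM (phi x = phi y); last first.
  by exists x, y; split=> //; apply: add_diff_class => //; [left | right].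
have [g1 [g2 [g3 [[g10 g20 g30] [g12 g23 g13]]]]] := phi_image3.
suff [a [b [a0 b0 ax bx ab]]] : exists a b,
    [/\ a != zero, b != zero, phi a <> phi x, phi b <> phi x & phi a <> phi b].
  by exists a, b; split=> //; apply: add_same_class.
have [g1x|g1x] := EM (phi g1 = phi x).
  by exists g2, g3; rewrite -g1x; split=> //; try apply/eqP; auto.
have [g2x|g2x] := EM (phi g2 = phi x).
  by exists g1, g3; rewrite -g2x; split=> //; try apply/eqP; auto.
by exists g1, g2; split=> //; apply/eqP.
Qed.

Lemma hsum_neq0 (s : seq F) : zero \notin s -> s != [::] -> exists2 w, hsum s w & w != zero.
Proof.
elim: s => [|x s IHs] //; rewrite in_cons negb_or eq_sym => /andP [x0 s0] _.
have [-> | sn0] := eqVneq s [::]; first by exists x.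
have [u su u0] := IHs s0 sn0.
have [w [_ [xuw _ w0 _ _]]] := add_two_classes x0 u0.
by exists w => //; apply/hsum_cons; exists u.
Qed.

Lemma hsum0_size_gt1 (s : seq F) :
  zero \notin s -> s != [::] -> hsum s zero -> 1 < size s.
Proof. by case: s => [|t [|]] //= + _ t0; rewrite t0 mem_head. Qed.

Lemma hsum_two_classes (s : seq F) : zero \notin s -> 1 < size s ->
  exists w1 w2, [/\ hsum s w1, hsum s w2, w1 != zero, w2 != zero & phi w1 <> phi w2].
Proof.
case: s => [|x s] //; rewrite in_cons negb_or eq_sym ltnS lt0n size_eq0.
move=> /andP [x0 s0] sn0.
have [u su u0] := hsum_neq0 s0 sn0.
have [w1 [w2 [xuw1 xuw2 w10 w20 w12]]] := add_two_classes x0 u0.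
by exists w1, w2; split=> //; apply/hsum_cons; exists u.
Qed.

Lemma hsum_full (s : seq F) :
  zero \notin s -> 2 < size s -> hsum s zero -> forall w, hsum s w.
Proof.
case: s => [|t s] //; rewrite in_cons negb_or eq_sym ltnS => /andP [t0 s0] s2.
move=> /hsum_cons [u [su tu0]] w; have u0 := opp_neq0 t0 tu0.
have [-> | w0] := eqVneq w zero; first by apply/hsum_cons; exists u.
have [wt|wt] := EM (phi w = phi t); last first.
  apply/hsum_cons; exists u; split=> //.
  by apply: add_same_class => //; rewrite (phi_opp t0 tu0).
have [w1 [w2 [sw1 sw2 w10 w20 w12]]] := hsum_two_classes s0 s2.
have [w1t|w1t] := EM (phi w1 = phi t).
  apply/hsum_cons; exists w2; split=> //.
  by apply: add_diff_class => //; [rewrite -w1t; auto | left].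
by apply/hsum_cons; exists w1; split=> //; apply: add_diff_class => //; [auto | left].
Qed.

Lemma opp_in_pair a t1 t2 : a != zero -> t1 != zero -> add t1 t2 zero ->
  phi a <> phi t1 -> exists2 b, add t1 t2 b & add a b zero.
Proof.
move=> a0 t10 t120 at1; have [b ab0] := opp_exists a.
exists b => //; apply: add_same_class => //; first exact: opp_neq0 t10 t120.
- by rewrite (phi_opp t10 t120).
- exact: opp_neq0 a0 ab0.
- by rewrite (phi_opp a0 ab0).
Qed.

Lemma hsum_extend (V S : seq F) : zero \notin V -> zero \notin S -> S != [::] ->
  hsum S zero -> size V != 1 \/ 2 < size S -> hsum (V ++ S) zero.
Proof.
move=> V0 S0 Sn0 S_0 VS; have [S3|S2] := ltnP 2 (size S).
  have [a Va] := hsum_total V; have [b ab0] := opp_exists a.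
  by apply/hsum_cat; exists a, b; split=> //; apply: hsum_full.
have [-> // | Vn0] := eqVneq V [::].
have V2 : 1 < size V.
  case: VS; last by rewrite ltnNge S2.
  by rewrite ltn_neqAle eq_sym lt0n size_eq0 Vn0 => ->.
clear VS; case: S S0 Sn0 S_0 S2 => [|t1 [|t2 [|]]] // S0 _.
  by move=> /= t1_0; rewrite -t1_0 mem_head in S0.
move=> /hsum_pair t120 _.
move: S0; rewrite !inE negb_or eq_sym => /andP [t10 _].
have [a1 [a2 [Va1 Va2 a10 a20 a12]]] := hsum_two_classes V0 V2.
have [a [Va a0 at1]] : exists a, [/\ hsum V a, a != zero & phi a <> phi t1].
  have [a1t1|] := EM (phi a1 = phi t1); last by exists a1.
  by exists a2; rewrite -a1t1; split; auto.
have [b t12b ab0] := opp_in_pair a0 t10 t120 at1.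
by apply/hsum_cat; exists a, b; split=> //; apply/hsum_pair.
Qed.

Lemma hsum_extend_critical a t1 t2 : a != zero -> t1 != zero -> add t1 t2 zero ->
  phi a <> phi t1 -> hsum [:: a; t1; t2] zero.
Proof.
move=> a0 t10 t120 at1; have [b t12b ab0] := opp_in_pair a0 t10 t120 at1.
by apply/hsum_cons; exists b; split=> //; apply/hsum_pair.
Qed.

(* With b the inverse of a nonzero a in the sum of C, c := b (-s) makes a c = -s. *)
Lemma hsum_pivot_candidates (C : seq F) : zero \notin C -> C != [::] ->
  exists2 b, b != zero & forall S s, s != zero -> hsum S s ->
    exists c, [/\ c != zero, phi c = hmul (phi b) (phi s)
                & hsum ([seq mul a c | a <- C] ++ S) zero].
Proof.
move=> C0 Cn0; have [a Ca a0] := hsum_neq0 C0 Cn0.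
have [b b0 ba] := mul_inv a0; exists b => // S s s0 Ss.
have [s' ss'0] := opp_exists s; have s'0 := opp_neq0 s0 ss'0.
exists (mul b s'); split; first exact: mul_neq0.
  by rewrite phiM // (phi_opp s0 ss'0).
apply/hsum_cat; exists s', s; split=> //; last exact/addC.
rewrite -(eq_map (mulC (mul b s'))); have := hsum_scale (mul b s') Ca.
by rewrite -mulA (mulC s') mulA ba mul1x.
Qed.

(** * Homogeneous linear systems *)

Variable n : nat.

Local Notation equation := (seq (F * 'I_n)).
Local Notation terms x E := [seq mul p.1 (x p.2) | p <- E].
Local Notation sat x E := (lin_eq_sat zero mul add E x).

Implicit Types (S T W D : {set 'I_n}) (E : equation) (es : seq equation)
  (x y z : 'I_n -> F).

Definition within (S : {set 'I_n}) (E : equation) := all (fun p => p.2 \in S) E.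
Definition meets (S : {set 'I_n}) (E : equation) := has (fun p => p.2 \in S) E.
Definition restrict (T : {set 'I_n}) (E : equation) := [seq p <- E | p.2 \in T].
Definition nz_coefs (E : equation) := all (fun p => p.1 != zero) E.

Definition hall_system (W : {set 'I_n}) (es : seq equation) :=
  [/\ all (within W) es, all nz_coefs es &
      forall S, S \subset W -> S != set0 -> count (within S) es < #|S|].

Definition solvable_with_support (W : {set 'I_n}) (es : seq equation) :=
  exists x : 'I_n -> F, [set j | x j != zero] = W /\ forall E, E \in es -> sat x E.

Lemma within_restrict S T E : within S (restrict T E) = within (S :|: ~: T) E.
Proof.
by rewrite /within all_filter; apply: eq_all => p; rewrite !inE implybE orbC.
Qed.

Lemma within_meetsC S E : within S E = ~~ meets (~: S) E.
Proof. by rewrite /within /meets -all_predC; apply: eq_all => p; rewrite /= inE negbK. Qed.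

Lemma sat_zero E : sat (fun=> zero) E.
Proof. by apply: hsum_zeros; apply/allP => _ /mapP [p _ ->]; rewrite /= mulx0. Qed.

Lemma eq_in_sat x x' E : (forall p, p \in E -> x p.2 = x' p.2) -> sat x E -> sat x' E.
Proof.
move=> xx'; rewrite /lin_eq_sat (_ : terms x' E = terms x E) //.
by apply/eq_in_map => p /xx' ->.
Qed.

Lemma sat_scale c y E : sat y E -> sat (fun j => mul c (y j)) E.
Proof.
move=> /(hsum_scale c); rewrite mulx0 -map_comp /lin_eq_sat.
by congr (hsum _ _); apply: eq_map => p /=; rewrite !mulA (mulC c).
Qed.

Lemma sat_partition (P : pred (F * 'I_n)) x E :
  hsum (terms x (filter P E) ++ terms x (filter (predC P) E)) zero -> sat x E.
Proof. by rewrite -map_cat; apply: hsum_perm; apply: perm_map; rewrite perm_filterC. Qed.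

Lemma sat_restrict x T E :
  [set j | x j != zero] \subset T -> sat x (restrict T E) -> sat x E.
Proof.
move=> /subsetP suppT xTE; apply: (@sat_partition (fun p => p.2 \in T)).
apply/hsum_cat; exists zero, zero; split=> //; last exact/add0x.
apply/hsum_zeros/allP => _ /mapP [p /[!mem_filter] /andP [pT _] ->] /=.
suff -> : x p.2 = zero by rewrite mulx0.
by apply/eqP; apply: contraNT pT => xp0; apply: suppT; rewrite inE.
Qed.

(** * Extending a solution at a pivot variable *)

Definition coefs_at v E := [seq p.1 | p <- E & p.2 == v].

(* The equations that a solution off v may fail to extend to every nonzero
   value of x_v: v occurs once, next to a two-term sum containing 0. *)
Definition critical v E := (count (fun p => p.2 == v) E == 1) && (size E == 3).

Definition nonzero_off v y E :=
  [/\ nz_coefs E, zero \notin terms y (restrict [set~ v] E)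
    & terms y (restrict [set~ v] E) != [::]].

Lemma size_coefs_at v E : size (coefs_at v E) = count (fun p => p.2 == v) E.
Proof. by rewrite size_map size_filter. Qed.

Lemma size_restrictC1 v E :
  size (restrict [set~ v] E) = size E - count (fun p => p.2 == v) E.
Proof.
rewrite size_filter -(count_predC (fun p => p.2 == v) E) addKn.
by apply: eq_count => p; rewrite !inE.
Qed.

Lemma size_restrict_critical v E : critical v E -> size (restrict [set~ v] E) = 2.
Proof. by case/andP => /eqP Ev1 /eqP E3; rewrite size_restrictC1 Ev1 E3. Qed.

Lemma sat_update y v c E :
  hsum ([seq mul a c | a <- coefs_at v E] ++ terms y (restrict [set~ v] E)) zero ->
  sat [eta y with v |-> c] E.
Proof.
move=> Esum; apply: (@sat_partition (fun p => p.2 == v)).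
rewrite (_ : terms _ (filter _ E) = [seq mul a c | a <- coefs_at v E]); last first.
  by rewrite -map_comp; apply/eq_in_map => p; rewrite mem_filter /= => /andP [-> _].
have -> : filter (predC (fun p : F * 'I_n => p.2 == v)) E = restrict [set~ v] E.
  by apply: eq_filter => p; rewrite /= !inE.
rewrite (_ : terms _ (restrict _ E) = terms y (restrict [set~ v] E)) //.
by apply/eq_in_map => p; rewrite mem_filter !inE /= => /andP [/negbTE -> _].
Qed.

Lemma sat_update_noncritical y v c E : nonzero_off v y E ->
  sat y (restrict [set~ v] E) -> ~~ critical v E -> c != zero ->
  sat [eta y with v |-> c] E.
Proof.
case=> Enz S0 Sn0 yS ncrit c0; apply: sat_update; apply: hsum_extend => //.
- rewrite -has_pred1 -all_predC; apply/allP => _ /mapP [_ /mapP [p pE ->] ->].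
  by apply: mul_neq0 => //; move: pE; rewrite mem_filter => /andP [_ /(allP Enz)].
move: (hsum0_size_gt1 S0 Sn0 yS) ncrit; rewrite !size_map size_restrictC1 size_filter.
have := count_size (fun p => p.2 == v) E; rewrite /critical.
by move: (count _ E) (size E) => k m; case: eqP; [move=> -> /=; lia | left].
Qed.

Lemma sat_update_critical y v c1 c2 E : nonzero_off v y E ->
  sat y (restrict [set~ v] E) -> critical v E ->
  c1 != zero -> c2 != zero -> phi c1 <> phi c2 ->
  sat [eta y with v |-> c1] E \/ sat [eta y with v |-> c2] E.
Proof.
case=> Enz S0 _ yS Ecrit c10 c20 c12.
have [a Ea] : exists a, coefs_at v E = [:: a].
  move: (size_coefs_at v E); case/andP: Ecrit => /eqP -> _.
  by case: (coefs_at v E) => [|a []] //; exists a.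
have [t1 [t2 Et]] : exists t1 t2, terms y (restrict [set~ v] E) = [:: t1; t2].
  move: (size_restrict_critical Ecrit); rewrite -(size_map (fun p => mul p.1 (y p.2))).
  by case: (terms y _) => [|t1 [|t2 []]] //; exists t1, t2.
have a0 : a != zero.
  have : a \in coefs_at v E by rewrite Ea mem_head.
  by case/mapP => p; rewrite mem_filter => /andP [_ /(allP Enz) p0] ->.
move: S0 yS; rewrite /lin_eq_sat Et !inE negb_or eq_sym => /andP [t10 _] /hsum_pair t120.
have ok c : c != zero -> phi (mul a c) <> phi t1 -> sat [eta y with v |-> c] E.
  move=> c0 act1; apply: sat_update; rewrite Ea Et.
  by apply: hsum_extend_critical => //; apply: mul_neq0.
have ac12 : phi (mul a c1) <> phi (mul a c2) by rewrite !phiM // => /hmulI.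
have [ac1t1|] := EM (phi (mul a c1) = phi t1); [right | left]; apply: ok => //.
by rewrite -ac1t1 => /esym.
Qed.

Lemma pivot_candidates y v E : nonzero_off v y E -> meets [set v] E ->
  exists2 b, b != zero & forall s, s != zero -> hsum (terms y (restrict [set~ v] E)) s ->
    exists c, [/\ c != zero, phi c = hmul (phi b) (phi s) & sat [eta y with v |-> c] E].
Proof.
case=> Enz _ _ Ev; have Cnz : zero \notin coefs_at v E.
  rewrite -has_pred1 -all_predC; apply/allP => _ /mapP [p /[!mem_filter] /andP [_ pE] ->].
  exact: (allP Enz).
have Cn0 : coefs_at v E != [::].
  by rewrite -size_eq0 size_coefs_at -lt0n -has_count; apply: sub_has Ev => p; rewrite inE.
have [b b0 cand] := hsum_pivot_candidates Cnz Cn0.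
exists b => // s s0 /(cand _ _ s0) [c [c0 phic Esum]].
by exists c; split=> //; apply: sat_update.
Qed.

Lemma exists_pivot_value y v E es : nonzero_off v y E -> meets [set v] E ->
  (forall E', E' \in es -> nonzero_off v y E' /\ sat y (restrict [set~ v] E')) ->
  count (critical v) es <= critical v E ->
  exists c, [/\ c != zero, sat [eta y with v |-> c] E
              & forall E', E' \in es -> sat [eta y with v |-> c] E'].
Proof.
move=> Eok Ev es_ok es_crit; have [_ S0 Sn0] := Eok.
have [b b0 cand] := pivot_candidates Eok Ev.
suff [c [c0 Ec crit]] : exists c, [/\ c != zero, sat [eta y with v |-> c] E
    & forall E', E' \in filter (critical v) es -> sat [eta y with v |-> c] E'].
  exists c; split=> // E' E'es; have [E'crit|E'ncrit] := boolP (critical v E').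
    by apply: crit; rewrite mem_filter E'crit.
  by have [E'ok yE'] := es_ok E' E'es; apply: sat_update_noncritical.
move: es_crit; rewrite -size_filter.
case def_crit: (filter (critical v) es) => [|E0 [|E1 crit]] es_crit;
  last by case: (critical v E) es_crit.
  have [s Ss s0] := hsum_neq0 S0 Sn0.
  by have [c [c0 _ Ec]] := cand s s0 Ss; exists c.
have : E0 \in filter (critical v) es by rewrite def_crit mem_head.
rewrite mem_filter => /andP [E0crit /es_ok [E0ok yE0]].
have Ecrit : critical v E by case: (critical v E) es_crit.
have : 1 < size (terms y (restrict [set~ v] E)) by rewrite size_map size_restrict_critical.
case/(hsum_two_classes S0) => s1 [s2 [Ss1 Ss2 s10 s20 s12]].
have [c1 [c10 phic1 Ec1]] := cand s1 s10 Ss1.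
have [c2 [c20 phic2 Ec2]] := cand s2 s20 Ss2.
have c12 : phi c1 <> phi c2 by rewrite phic1 phic2 => /hmulI.
have [E0c1|E0c2] := sat_update_critical E0ok yE0 E0crit c10 c20 c12;
  [exists c1 | exists c2]; by split=> // E'; rewrite inE => /eqP ->.
Qed.

Lemma support_update W v c y : v \in W -> c != zero ->
  [set j | y j != zero] = W :\ v -> [set j | [eta y with v |-> c] j != zero] = W.
Proof.
move=> vW c0 /setP suppy; apply/setP => j; rewrite inE /=.
have [-> | jv] := eqVneq j v; first by rewrite c0 vW.
by have := suppy j; rewrite !inE jv.
Qed.

Lemma extend_pivot_solution W es v E y : hall_system W es -> v \in W -> E \in es ->
  meets [set v] E -> count (critical v) (rem E es) <= critical v E ->
  [set j | y j != zero] = W :\ v ->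
  (forall E', E' \in rem E es -> sat y (restrict [set~ v] E')) ->
  solvable_with_support W es.
Proof.
case=> esW es_nz es_hall vW Ees Ev crit suppy ysat.
have /hasPn not_within_v : ~~ has (within [set v]) es.
  rewrite has_count -leqNgt -ltnS -(cards1 v) es_hall ?sub1set //.
  by rewrite -card_gt0 cards1.
have ok E' : E' \in es -> nonzero_off v y E'.
  move=> E'es; split; first exact: (allP es_nz).
    rewrite -has_pred1 -all_predC; apply/allP => _ /mapP [p + ->].
    rewrite mem_filter => /andP [pv pE'].
    apply: mul_neq0; first exact: (allP (allP es_nz _ E'es)).
    have : p.2 \in W :\ v by rewrite in_setD1 -in_setC1 pv (allP (allP esW _ E'es)).
    by rewrite -suppy inE.
  rewrite -size_eq0 size_map size_eq0 /restrict -has_filter.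
  by have := not_within_v E' E'es; rewrite within_meetsC negbK.
have [c [c0 Ec Erem]] := exists_pivot_value (ok E Ees) Ev
  (fun E' E'rem => conj (ok E' (mem_rem E'rem)) (ysat E' E'rem)) crit.
exists [eta y with v |-> c]; split; first exact: support_update.
by move=> E'; rewrite (perm_mem (perm_to_rem Ees)) inE => /predU1P [-> | /Erem].
Qed.

Lemma sum_count_var E : \sum_(v : 'I_n) count (fun p => p.2 == v) E = size E.
Proof.
elim: E => [|p E IHE] /=; first by rewrite big1.
rewrite big_split /= IHE (bigD1 p.2) //= eqxx big1 ?addn0 // => v.
by rewrite eq_sym => /negbTE ->.
Qed.

(* A critical equation has three terms, so it is critical for at most three variables. *)
Lemma exists_pivot_variable W es : size es < #|W| ->
  exists2 v, v \in W & count (critical v) es <= 2.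
Proof.
move=> es_W; have [/exists_inP // | /exists_inPn many] :=
  boolP [exists v in W, count (critical v) es <= 2].
exfalso; have : \sum_(v in W) 3 <= \sum_(v in W) count (critical v) es.
  by apply: leq_sum => v /many; rewrite -ltnNge.
rewrite sum_nat_const leqNgt => /negP; apply.
apply: (@leq_ltn_trans (3 * size es)); last by lia.
elim: es {es_W many} => [|E es IHes]; first by rewrite big1.
rewrite big_split mulnS /= leq_add //.
rewrite /critical; have [E3|_] := eqVneq (size E) 3; last first.
  by rewrite big1 // => v _; rewrite andbF.
rewrite -E3 -(sum_count_var E).
apply: (@leq_trans (\sum_(v in W) count (fun p => p.2 == v) E)).
  by apply: leq_sum => v _; rewrite andbT; case: eqP => [->|].
by rewrite [X in _ <= X](bigID (mem W)) leq_addr.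
Qed.

Lemma exists_pivot_equation v es : has (meets [set v]) es -> count (critical v) es <= 2 ->
  exists E, [/\ E \in es, meets [set v] E & count (critical v) (rem E es) <= critical v E].
Proof.
move=> es_v crit2.
have [/hasP [E Ees Ecrit] | /hasPn nocrit] := boolP (has (critical v) es).
  exists E; split=> //; last by move: crit2; rewrite (count_rem _ Ees) Ecrit.
  move: Ecrit => /andP [/eqP Ev1 _]; rewrite /meets has_count.
  by under eq_count => p do rewrite inE; rewrite Ev1.
have [E Ees Ev] := hasP es_v; exists E; split=> //.
by rewrite (eq_in_count (a2 := pred0)) ?count_pred0 // => E' /mem_rem /nocrit /negbTE.
Qed.

Lemma hall_system_within W es T : hall_system W es -> T \subset W ->
  hall_system T (filter (within T) es).
Proof.
case=> _ es_nz es_hall TW; split; first exact: filter_all.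
  by apply/allP => E; rewrite mem_filter => /andP [_ /(allP es_nz)].
move=> S ST S0; rewrite count_filter.
apply: leq_ltn_trans (es_hall S (subset_trans ST TW) S0).
by apply: sub_count => E /andP [].
Qed.

Lemma hall_system_drop_pivot W es v E : hall_system W es -> v \in W -> E \in es ->
  (forall T, T \proper W -> 1 < #|T| -> count (within T) es < #|T|.-1) ->
  hall_system (W :\ v) [seq restrict [set~ v] E' | E' <- rem E es].
Proof.
case=> esW es_nz es_hall vW Ees strict; split.
- apply/allP => _ /mapP [E' /mem_rem E'es ->]; apply/allP => p.
  by rewrite mem_filter in_setD1 -in_setC1 => /andP [-> /(allP (allP esW _ E'es))].
- apply/allP => _ /mapP [E' /mem_rem E'es ->]; apply/allP => p.
  by rewrite mem_filter => /andP [_ /(allP (allP es_nz _ E'es))].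
move=> S SWv S0; rewrite count_map.
under eq_count => E' do rewrite /= within_restrict setCK setUC.
have vS : v \notin S by apply/negP => /(subsetP SWv); rewrite !inE eqxx.
have vSW : v |: S \subset W by rewrite subUset sub1set vW (subset_trans SWv (subD1set W v)).
have card_vS : #|v |: S| = #|S|.+1 by rewrite cardsU1 vS.
have rem_le : count (within (v |: S)) (rem E es) <= count (within (v |: S)) es.
  by rewrite (count_rem _ Ees) leq_addl.
have [vS_W | vS_W] := eqVneq (v |: S) W.
  have : size es < #|W|.
    move: esW; rewrite all_count => /eqP <-; apply: es_hall => //.
    by rewrite -card_gt0 -vS_W card_vS.
  rewrite -vS_W card_vS => es_vS; apply: leq_ltn_trans (count_size _ _) _.
  have es0 : 0 < size es by rewrite -has_predT; apply/hasP; exists E.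
  by rewrite size_rem // -ltnS prednK.
have := strict (v |: S); rewrite properEneq vS_W vSW card_vS ltnS card_gt0 => /(_ isT S0).
exact: leq_ltn_trans.
Qed.

Definition contract T u y E : equation :=
  [seq if p.2 \in T then (mul p.1 (y p.2), u) else p | p <- E].

Lemma terms_contract z T u y E :
  terms z (contract T u y E) = terms (fun j => if j \in T then mul (z u) (y j) else z j) E.
Proof.
rewrite -map_comp; apply: eq_map => p /=.
by case: ifP => //= _; rewrite -!mulA (mulC (z u)).
Qed.

Lemma within_contract S T u y E : S :&: T \subset [set u] ->
  within S (contract T u y E) = within (if u \in S then T :|: S else S) E.
Proof.
move=> /subsetP STu; rewrite /within all_map; apply: eq_all => p /=.
case: ifP => pT /=; case: ifP => uS; rewrite ?inE ?pT ?uS ?orbT //=.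
apply/esym/negP => pS; have /STu : p.2 \in S :&: T by rewrite inE pS pT.
by rewrite inE => /eqP pu; rewrite -pu pS in uS.
Qed.

Lemma hall_system_contract W es T u y : hall_system W es -> T \subset W ->
  u \in T -> #|T|.-1 <= count (within T) es -> (forall j, j \in T -> y j != zero) ->
  hall_system (u |: (W :\: T)) [seq contract T u y E | E <- es & ~~ within T E].
Proof.
case=> esW es_nz es_hall TW uT tightT yT; split.
- apply/allP => _ /mapP [E /[!mem_filter] /andP [_ Ees] ->].
  apply/allP => _ /mapP [p pE ->]; case: ifP => pT; rewrite /= !inE ?eqxx // pT /=.
  by rewrite (allP (allP esW _ Ees)) ?orbT.
- apply/allP => _ /mapP [E /[!mem_filter] /andP [_ Ees] ->].
  apply/allP => _ /mapP [p pE ->]; have p0 := allP (allP es_nz _ Ees) p pE.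
  by case: ifP => pT //=; apply: mul_neq0 => //; apply: yT.
move=> S SW' S0; rewrite count_map count_filter.
have STu : S :&: T \subset [set u].
  apply/subsetP => j /setIP [/(subsetP SW') /[!inE] + jT]; rewrite jT /= orbF.
  by move=> /eqP ->; rewrite ?inE.
under eq_count => E do rewrite /= within_contract //.
case: ifP => uS.
  have TSW : T :|: S \subset W.
    rewrite subUset TW; apply/subsetP => j /[dup] jS /(subsetP SW').
    by rewrite !inE => /orP [/eqP -> | /andP [_ ->]] //; apply: (subsetP TW).
  have TS0 : T :|: S != set0 by apply/set0Pn; exists u; rewrite inE uT.
  have := es_hall _ TSW TS0; rewrite -(count_andNsub _ (b := within T)); last first.
    by move=> E; apply: sub_all => p /=; rewrite inE => ->.
  have := cardsUI T S; have : 0 < #|T :&: S| by apply/card_gt0P; exists u; rewrite inE uT.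
  by move: tightT; lia.
have SW : S \subset W :\: T.
  apply/subsetP => j jS; move: (subsetP SW' j jS); rewrite !inE => /orP [/eqP ju | //].
  by rewrite -ju jS in uS.
apply: leq_ltn_trans (es_hall S (subset_trans SW (subsetDl W T)) S0).
by apply: sub_count => E /andP [].
Qed.

Section InductionStep.

Variable W : {set 'I_n}.
Hypothesis solvable_smaller : forall W' es',
  #|W'| < #|W| -> hall_system W' es' -> solvable_with_support W' es'.

Lemma solvable_by_contraction es T :
  hall_system W es -> T \proper W -> 1 < #|T| -> #|T|.-1 <= count (within T) es ->
  solvable_with_support W es.
Proof.
move=> sys TW T1 tightT; have TsubW := proper_sub TW.
have [y [suppy ysat]] := solvable_smaller (proper_card TW) (hall_system_within sys TsubW).
have yT j : j \in T -> y j != zero by rewrite -suppy inE.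
have [u uT] : exists u, u \in T by apply/card_gt0P; lia.
have W'W : #|u |: (W :\: T)| < #|W|.
  by rewrite cardsU1 !inE uT cardsDS //; have := proper_card TW; lia.
have [z [suppz zsat]] := solvable_smaller W'W (hall_system_contract sys TsubW uT tightT yT).
have zW j : (z j != zero) = (j \in u |: (W :\: T)) by rewrite -suppz inE.
exists (fun j => if j \in T then mul (z u) (y j) else z j); split.
  apply/setP => j; rewrite inE; case: ifP => jT.
    by rewrite mul_neq0 ?yT ?zW ?setU11 ?(subsetP TsubW).
  by rewrite zW !inE jT; case: eqP => // ju; rewrite ju uT in jT.
move=> E Ees; have [ET|ET] := boolP (within T E).
  apply: eq_in_sat (sat_scale (z u) (ysat E _)); last by rewrite mem_filter ET.
  by move=> p pE; rewrite (allP ET p pE).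
have := zsat (contract T u y E); rewrite /lin_eq_sat terms_contract; apply.
by apply: map_f; rewrite mem_filter ET.
Qed.

Lemma solvable_by_pivot es :
  hall_system W es -> W != set0 ->
  (forall T, T \proper W -> 1 < #|T| -> count (within T) es < #|T|.-1) ->
  solvable_with_support W es.
Proof.
move=> sys W0 strict; have [esW _ es_hall] := sys.
have es_W : size es < #|W| by move: esW; rewrite all_count => /eqP <-; apply: es_hall.
have [v vW crit2] := exists_pivot_variable es_W.
have Wv : #|W :\ v| < #|W| by rewrite (cardsD1 v W) vW.
have [es_v | /hasPn unused] := boolP (has (meets [set v]) es).
  have [E [Ees Ev crit]] := exists_pivot_equation es_v crit2.
  have [y [suppy ysat]] := solvable_smaller Wv (hall_system_drop_pivot sys vW Ees strict).
  by apply: extend_pivot_solution sys vW Ees Ev crit suppy _ => E' E'es; apply/ysat/map_f.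
have esWv : all (within (W :\ v)) es.
  apply/allP => E Ees; apply/allP => p pE.
  rewrite in_setD1 (allP (allP esW _ Ees)) // andbT.
  by apply: contraNneq (unused E Ees) => pv; apply/hasP; exists p; rewrite ?inE ?pv.
have [y [suppy ysat]] := solvable_smaller Wv (hall_system_within sys (subD1set W v)).
exists [eta y with v |-> one]; split; first exact: support_update one_neq0 suppy.
move=> E Ees; apply: eq_in_sat (ysat E _); last by rewrite (all_filterP esWv).
move=> p pE /=; case: eqP => // pv; case/negP: (unused E Ees).
by apply/hasP; exists p; rewrite ?inE ?pv.
Qed.

End InductionStep.

Lemma hall_system_solvable W es : hall_system W es -> solvable_with_support W es.
Proof.
have [N] := ubnP #|W|; elim: N => // N IH in W es *; rewrite ltnS => WN sys.
have IHW W' es' : #|W'| < #|W| -> hall_system W' es' -> solvable_with_support W' es'.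
  by move=> W'W; apply: IH; apply: leq_trans WN.
have [-> | W0] := eqVneq W set0.
  exists (fun=> zero); split=> [|E _]; last exact: sat_zero.
  by apply/setP => j; rewrite !inE eqxx.
have [[T [TW T1 tightT]] | loose] :=
  EM (exists T, [/\ T \proper W, 1 < #|T| & #|T|.-1 <= count (within T) es]).
  exact: (solvable_by_contraction (W := W) IHW sys TW T1 tightT).
apply: (solvable_by_pivot (W := W) IHW sys W0) => T TW T1.
by rewrite ltnNge; apply/negP => tightT; apply: loose; exists T.
Qed.

Lemma hall_system_minimal T es : all nz_coefs es -> count (meets T) es < #|T| ->
  (forall D, #|D| < #|T| -> #|D| <= count (meets D) es) ->
  hall_system T [seq restrict T E | E <- es & meets T E].
Proof.
move=> es_nz esT minT; split.
- by apply/allP => _ /mapP [E _ ->]; apply/allP => p; rewrite mem_filter => /andP [].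
- apply/allP => _ /mapP [E /[!mem_filter] /andP [_ Ees] ->]; apply/allP => p.
  by rewrite mem_filter => /andP [_ /(allP (allP es_nz _ Ees))].
move=> S ST S0; rewrite count_map count_filter.
under eq_count => E do
  rewrite /= within_restrict within_meetsC setCU setCK setIC -setDE andbC.
have cardTS : #|T :\: S| = #|T| - #|S| by rewrite cardsDS.
have meetsDT : subpred (meets (T :\: S)) (meets T).
  by move=> E; apply: sub_has => p; rewrite inE => /andP [].
have := @count_andNsub _ _ _ es meetsDT; have := minT (T :\: S).
have := subset_leq_card ST; have : 0 < #|S| by rewrite card_gt0.
by move: esT; lia.
Qed.

Lemma fetvins es : all nz_coefs es -> size es < n ->
  exists x : 'I_n -> F, (exists j, x j != zero) /\ forall E, E \in es -> sat x E.
Proof.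
move=> es_nz es_n; pose P T := (T != set0) && (count (meets T) es < #|T|).
have PT : P setT.
  rewrite /P -card_gt0 cardsT card_ord (leq_ltn_trans (count_size _ _) es_n) andbT.
  exact: leq_ltn_trans (leq0n _) es_n.
have [T /andP [T0 esT] Tmin] := arg_minnP (fun T : {set 'I_n} => #|T|) PT.
have minT D : #|D| < #|T| -> #|D| <= count (meets D) es.
  move=> DT; have [-> | D0] := eqVneq D set0; first by rewrite cards0.
  rewrite leqNgt; apply/negP => Dsmall.
  by have := Tmin D; rewrite /P D0 Dsmall leqNgt DT => /(_ isT).
have [x [suppx xsat]] := hall_system_solvable (hall_system_minimal es_nz esT minT).
exists x; split; first by have /set0Pn [j] := T0; rewrite -suppx inE; exists j.
move=> E Ees; apply: (@sat_restrict _ T); first by rewrite suppx.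
have [ET | ET] := boolP (meets T E); first by apply/xsat/map_f; rewrite mem_filter ET.
by move: ET; rewrite /meets has_filter negbK -/(restrict T E) => /eqP ->.
Qed.

End Massouros.

Theorem mainTheorem1 (F : Type) (zero one : F) (mul : F -> F -> F)
  (add : F -> F -> F -> Prop)
  (H : Type) (hmul : H -> H -> H) (hone : H) (hinv : H -> H) (phi : F -> H) :
  is_massouros zero one mul add hmul hone hinv phi ->
  forall (k n : nat), (k < n)%N ->
  forall eqs : 'I_k -> seq (F * 'I_n),
    (forall i, lin_eq_wf zero (eqs i)) ->
    exists x : 'I_n -> F,
      (exists j, x j <> zero) /\ (forall i, lin_eq_sat zero mul add (eqs i) x).
Proof.
move=> [hypF [mulC _] [groupH phiM] phi3 [M1 M2 M3]] k n ltkn eqs eqs_wf.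
pose es := [seq eqs i | i <- enum 'I_k].
(* {classic F} equips F with a (classical) decidable equality. *)
have es_nz : all (@nz_coefs _ (zero : {classic F}) n) es.
  apply/allP => _ /mapP [i _ ->]; apply/allP => -[a j] /mem_In aj.
  by have [nz _] := eqs_wf i; apply/eqP/(nz a j).
have [|x [[j xj] xsat]] :=
  @fetvins {classic F} _ _ _ _ hypF _ _ _ _ _ mulC groupH phiM phi3 M1 M2 M3 _ _ es_nz.
  by rewrite size_map size_enum_ord.
exists x; split; first by exists j; move/eqP: xj.
by move=> i; apply/xsat/map_f; rewrite mem_enum.
Qed.
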